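(* Let $f\in\mathscr{C}^1(\mathbb{R},\mathbb{R})$ and $n\ge 2$. Then \[ \mathbb{E}[f'(Z_n)] = K_n\,\mathbb{E}\big[e^{-\beta_n Z_{n-1}}\,f'\big(\alpha_n Z_{n-1}+G_n+\delta_n\big)\big], \] where $G_n$ has the distribution $n^{-1}\operatorname{Geom}(1/n)$ and is independent of $Z_{n-1}$.
   Context: For $m\ge1$, $Z_m=\frac{T_m}{m}-\log m$, where $T_m=\sum_{i=1}^m\tau_i^m$ with $\tau_1^m,\dots,\tau_m^m$ independent and $\tau_i^m\sim\operatorname{Geom}\big(\frac{m-i+1}{m}\big)$ ($T_m$ is the coupon collector's completion time for $m$ coupons). $\operatorname{Geom}(p)$, $p\in(0,1]$, is the geometric law on $\{1,2,\dots\}$: $P(k)=p(1-p)^{k-1}$. Constants: $\alpha_n=1-\frac1n$, $\beta_n=-(n-1)\log\alpha_n$, $K_n=n\big(1-\frac1n\big)^{(n-1)\log(n-1)}$, $\delta_n=\log\big(1-\frac1n\big)-\frac1n\log(n-1)$. *)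

From HB Require Import structures.
From mathcomp Require Import all_boot all_order all_algebra.
From mathcomp Require Import all_classical all_reals all_analysis.
Set Implicit Arguments. Unset Strict Implicit. Unset Printing Implicit Defensive.
Import Order.TTheory GRing.Theory Num.Theory.
Local Open Scope classical_set_scope.
Local Open Scope ring_scope.

Section defs.
Context {d : measure_display} {T : measurableType d} {R : realType}.

Definition is_geom (P : probability T R) (X : T -> R) (p : R) : Prop :=
  forall k : nat, (1 <= k)%N ->
    P (X @^-1` [set k%:R]) = (p * (1 - p) ^+ (k - 1))%:E.

Definition is_scaled_geom (P : probability T R) (X : T -> R) (c p : R) : Prop :=
  forall k : nat, (1 <= k)%N ->
    P (X @^-1` [set c * k%:R]) = (p * (1 - p) ^+ (k - 1))%:E.

Definition mutually_independent (P : probability T R) (I : seq nat)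
    (X : nat -> T -> R) : Prop :=
  forall (J : seq nat) (B : nat -> set R),
    uniq J -> {subset J <= I} -> (forall i, measurable (B i)) ->
    P (\bigcap_(i in [set i | i \in J]) (X i @^-1` B i)) =
    (\prod_(i <- J) P (X i @^-1` B i))%E.

Definition independent2 (P : probability T R) (X Y : T -> R) : Prop :=
  forall A B : set R, measurable A -> measurable B ->
    P (X @^-1` A `&` Y @^-1` B) = (P (X @^-1` A) * P (Y @^-1` B))%E.

End defs.

Definition Tm {T : Type} {R : realType} (tau : nat -> nat -> T -> R) (m : nat)
  (w : T) : R := \sum_(1 <= i < m.+1) tau m i w.
Definition Zm {T : Type} {R : realType} (tau : nat -> nat -> T -> R) (m : nat)
  (w : T) : R := Tm tau m w / m%:R - ln m%:R.

Definition alpha_ {R : realType} (n : nat) : R := 1 - n%:R^-1.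
Definition beta_ {R : realType} (n : nat) : R := - ((n - 1)%:R * ln (alpha_ n)).
Definition K_ {R : realType} (n : nat) : R :=
  n%:R * powR (1 - n%:R^-1) ((n - 1)%:R * ln (n - 1)%:R).
Definition delta_ {R : realType} (n : nat) : R :=
  ln (1 - n%:R^-1) - n%:R^-1 * ln (n - 1)%:R.

From HB Require Import structures.
From mathcomp Require Import all_boot all_order all_algebra.
From mathcomp Require Import all_classical all_reals all_analysis.
From mathcomp Require Import measurable_realfun ring.
Set Implicit Arguments.
Unset Strict Implicit.
Unset Printing Implicit Defensive.
Import Order.TTheory GRing.Theory Num.Theory.
Import numFieldNormedType.Exports.
Local Open Scope classical_set_scope.
Local Open Scope ring_scope.

(* On {S = s, tau_n = k}, where S = tau_1 + ... + tau_(n-1) for n coupons,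
   Z_n = alpha_n (s/(n-1) - log(n-1)) + k/n + delta_n; S and tau_n ~ Geom(1/n)
   are independent, and tau_n/n has the law of G.  The law of tau_i for n coupons
   is the law of tau_i for n-1 coupons tilted by k |-> alpha_n^k, so by induction
   along the convolution formula
     alpha_n^s P(S'_j = s) = ((n-j)/n) P(S_j = s)
   (primes: partial sums for n-1 coupons).  For j = n-1 this reads
   P(S = s) = n alpha_n^s P(T_(n-1) = s) = K_n exp(-beta_n Z_(n-1)) P(T_(n-1) = s),
   and summing over the values of (S, tau_n) gives the identity for nonnegative
   test functions; the general case follows by splitting f' into its positive
   and negative parts. *)

Lemma geometric_law_sum {R : realType} (p : R) : 0 < p <= 1 ->
  (\sum_(k <oo) (p * (1 - p) ^+ k)%:E = 1)%E.
Proof.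
move=> /andP[p0 p1].
have cvg_geo : series (geometric p (1 - p)) @ \oo --> p / (1 - (1 - p)).
  by apply: cvg_geometric_series; rewrite ger0_norm ?subr_ge0 // ltrBlDr ltrDl.
have -> : (\sum_(k <oo) (p * (1 - p) ^+ k)%:E)%E =
    limn (EFin \o series (geometric p (1 - p))).
  by congr (limn _); apply/funext => n /=; rewrite /series /= sumEFin.
rewrite EFin_lim; last by apply/cvg_ex; exists (p / (1 - (1 - p))).
by rewrite (cvg_lim _ cvg_geo) // opprB addrCA subrr addr0 divff ?gt_eqF.
Qed.

Lemma natrS_inj {R : realType} : injective (fun k => k.+1%:R : R).
Proof. by move=> a b /(mulrIn (oner_neq0 R)) []. Qed.

Section discrete_random_variable.
Context {d : measure_display} {T : measurableType d} {R : realType}.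
Variable P : probability T R.
Local Open Scope ereal_scope.

Lemma measurable_preimage (X : T -> R) (B : set R) :
  measurable_fun [set: T] X -> measurable B -> measurable (X @^-1` B).
Proof. by move=> mX mB; rewrite -[X @^-1` _]setTI; apply: mX. Qed.

Definition ae_valued_in (X : T -> R) (x : nat -> R) :=
  P (~` \bigcup_k X @^-1` [set x k]) = 0.

Section decomposition.
Variables (X : T -> R) (x : nat -> R).
Hypotheses (mX : measurable_fun [set: T] X) (x_inj : injective x).
Hypothesis X_in_x : ae_valued_in X x.

Let mX1 k : measurable (X @^-1` [set x k]).
Proof. exact: measurable_preimage (measurable_set1 _). Qed.

Lemma ge0_integral_discrete_decomp (D : set T) (h : T -> \bar R) :
  measurable D -> measurable_fun [set: T] h -> (forall t, 0 <= h t) ->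
  \int[P]_(w in D) h w = \sum_(k <oo) \int[P]_(w in D `&` X @^-1` [set x k]) h w.
Proof.
move=> mD mh h0.
have mU : measurable (\bigcup_k X @^-1` [set x k]) by exact: bigcupT_measurable.
have mDk k : measurable (D `&` X @^-1` [set x k]) by exact: measurableI.
have mDC : measurable (D `&` ~` \bigcup_k X @^-1` [set x k]).
  exact/measurableI/measurableC.
have splitD : D = \bigcup_k (D `&` X @^-1` [set x k]) `|`
                  (D `&` ~` \bigcup_k X @^-1` [set x k]).
  by rewrite -setI_bigcupr -setIUr setUCr setIT.
rewrite {1}splitD.
rewrite ge0_integral_setU //; last 3 first.
- exact: bigcupT_measurable.
- exact: measurable_funTS.
- by rewrite -setI_bigcupr; apply/disj_setPS => t [[_ +] [_ +]].
rewrite [X in _ + X]null_set_integral //; last 2 first.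
- exact: measurable_funTS.
- apply/eqP; rewrite eq_le measure_ge0 andbT -X_in_x.
  by apply: le_measure; rewrite ?inE //; exact: measurableC.
rewrite adde0 ge0_integral_bigcup //.
- exact: measurable_funTS.
- by move=> i j _ _ [t [[_ /= ->] [_ /= e]]]; exact: x_inj.
Qed.

Lemma measure_discrete_decomp (A : set T) : measurable A ->
  P A = \sum_(k <oo) P (A `&` X @^-1` [set x k]).
Proof.
move=> mA; rewrite -[P A]mul1e -(integral_cst P mA).
rewrite (@ge0_integral_discrete_decomp A (cst 1)) //.
by apply: eq_eseriesr => k _; rewrite integral_cst ?mul1e //; exact: measurableI.
Qed.

End decomposition.

Lemma geometric_ae_valued_in (X : T -> R) (x : nat -> R) (p : R) :
  measurable_fun [set: T] X -> injective x -> (0 < p <= 1)%R ->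
  (forall k, P (X @^-1` [set x k]) = (p * (1 - p) ^+ k)%:E) ->
  ae_valued_in X x.
Proof.
move=> mX x_inj p01 lawX.
have mX1 k : measurable (X @^-1` [set x k]).
  exact: measurable_preimage (measurable_set1 _).
rewrite /ae_valued_in probability_setC; last exact: bigcupT_measurable.
rewrite measure_bigcup //=; last by move=> i j _ _ [t [/= -> e]]; exact: x_inj.
rewrite (eq_eseriesr (g := fun k => (p * (1 - p) ^+ k)%:E)); last by move=> k _.
rewrite [X in 1 - X](_ : _ = \sum_(k <oo) (p * (1 - p) ^+ k)%:E).
  by rewrite geometric_law_sum // subee.
by congr (limn _); apply/funext => n; apply: eq_bigl => i; rewrite in_setT.
Qed.

Lemma ge0_integral_discrete2 (h : T -> \bar R) (X Y : T -> R) (x y : nat -> R)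
    (c : nat -> nat -> \bar R) :
  measurable_fun [set: T] h -> (forall t, 0 <= h t) ->
  measurable_fun [set: T] X -> measurable_fun [set: T] Y ->
  injective x -> injective y -> ae_valued_in X x -> ae_valued_in Y y ->
  (forall s k t, X t = x s -> Y t = y k -> h t = c s k) ->
  \int[P]_w h w =
  \sum_(s <oo) \sum_(k <oo) (c s k * P (X @^-1` [set x s] `&` Y @^-1` [set y k])).
Proof.
move=> mh h0 mX mY x_inj y_inj X_in_x Y_in_y hc.
rewrite (ge0_integral_discrete_decomp mX x_inj X_in_x measurableT mh h0).
apply: eq_eseriesr => s _.
have mXs : measurable ([set: T] `&` X @^-1` [set x s]).
  by apply: measurableI => //; exact: measurable_preimage (measurable_set1 _).
rewrite (ge0_integral_discrete_decomp mY y_inj Y_in_y mXs mh h0).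
apply: eq_eseriesr => k _; rewrite setTI.
have mXY : measurable (X @^-1` [set x s] `&` Y @^-1` [set y k]).
  by apply: measurableI; exact: measurable_preimage (measurable_set1 _).
rewrite -(integral_cst P mXY); apply: eq_integral => t; rewrite inE => -[Xs Yk].
exact: hc.
Qed.

End discrete_random_variable.

Definition psum {T : Type} {R : realType} (tau : nat -> T -> R) (j : nat) (w : T) : R :=
  \sum_(1 <= i < j.+1) tau i w.

Lemma psum0 {T : Type} {R : realType} (tau : nat -> T -> R) w : psum tau 0 w = 0.
Proof. by rewrite /psum big_geq. Qed.

Lemma psumS {T : Type} {R : realType} (tau : nat -> T -> R) j w :
  psum tau j.+1 w = psum tau j w + tau j.+1 w.
Proof. by rewrite /psum big_nat_recr. Qed.

Lemma psum0_preimage {T : Type} {R : realType} (tau : nat -> T -> R) r :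
  psum tau 0 @^-1` [set r] = if r == 0 then [set: T] else set0.
Proof.
apply/seteqP; split => w /=; rewrite psum0; first by move=> <-; rewrite eqxx.
by case: eqP.
Qed.

Section independent_partial_sums.
Context {d : measure_display} {T : measurableType d} {R : realType}.
Variable P : probability T R.
Variables (tau : nat -> T -> R) (m : nat).
Hypothesis mtau : forall i, measurable_fun [set: T] (tau i).
Hypothesis tau_indep : mutually_independent P (index_iota 1 m.+1) tau.
Hypothesis tau_pos_nat : forall i, (1 <= i <= m)%N ->
  ae_valued_in P (tau i) (fun k => k.+1%:R).
Local Open Scope ereal_scope.

Let mtau1 i r : measurable (tau i @^-1` [set r]).
Proof. exact: measurable_preimage (measurable_set1 _). Qed.

Lemma measurable_psum j : measurable_fun [set: T] (psum tau j).
Proof. exact: measurable_sum. Qed.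

Let mpsum1 j r : measurable (psum tau j @^-1` [set r]).
Proof. exact: measurable_preimage (measurable_psum j) (measurable_set1 _). Qed.

Definition joint_event (J : seq nat) (B : nat -> set R) : set T :=
  \bigcap_(i in [set i | i \in J]) tau i @^-1` B i.

Lemma joint_event_nil B : joint_event [::] B = [set: T].
Proof.
rewrite /joint_event (_ : [set i | i \in [::]] = set0) ?bigcap_set0 //.
by apply/seteqP; split => i.
Qed.

Lemma joint_event_cons i J B :
  joint_event (i :: J) B = tau i @^-1` B i `&` joint_event J B.
Proof.
rewrite /joint_event (_ : [set k | k \in i :: J] = i |` [set k | k \in J]).
  by rewrite bigcap_setU1.
apply/seteqP; split => k /=; rewrite inE.
- by case/orP => [/eqP|]; [left|right].
- by case=> [->|->]; rewrite ?eqxx ?orbT.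
Qed.

Lemma measurable_joint_event J B : (forall i, measurable (B i)) ->
  measurable (joint_event J B).
Proof.
move=> mB; elim: J => [|i J IH]; first by rewrite joint_event_nil.
by rewrite joint_event_cons; apply: measurableI => //; exact: measurable_preimage.
Qed.

Lemma joint_event_cons_indep i J B r : uniq (i :: J) ->
  {subset i :: J <= index_iota 1 m.+1} -> (forall k, measurable (B k)) ->
  P (tau i @^-1` [set r] `&` joint_event J B) =
  P (tau i @^-1` [set r]) * P (joint_event J B).
Proof.
move=> uiJ iJm mB; have /andP[iNJ uJ] := uiJ.
pose B' k := if k == i then [set r] else B k.
have mB' k : measurable (B' k) by rewrite /B'; case: ifP.
have B'E : {in J, B' =1 B}.
  by move=> k kJ; rewrite /B' ifF //; apply: contraNF iNJ => /eqP <-.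
have -> : tau i @^-1` [set r] `&` joint_event J B = joint_event (i :: J) B'.
  rewrite joint_event_cons {1}/B' eqxx; congr (_ `&` _).
  by apply: eq_bigcapr => k /B'E ->.
rewrite tau_indep // big_cons {1}/B' eqxx tau_indep //; last first.
  by move=> k kJ; apply: iJm; rewrite inE kJ orbT.
by congr (_ * _); apply: eq_big_seq => k /B'E ->.
Qed.

Lemma psum_setI_decomp j r A : (j < m)%N -> measurable A ->
  P (psum tau j.+1 @^-1` [set r] `&` A) =
  \sum_(k <oo) P (psum tau j @^-1` [set (r - k.+1%:R)%R] `&`
                  (tau j.+1 @^-1` [set k.+1%:R] `&` A)).
Proof.
move=> jm mA.
rewrite (measure_discrete_decomp (mtau j.+1) natrS_inj (tau_pos_nat _)) //;
  last exact: measurableI.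
apply: eq_eseriesr => k _; congr (P _); apply/seteqP; split => t /=.
- by move=> [[<- At] tk]; rewrite psumS tk addrK.
- by move=> [Sa [tk At]]; rewrite psumS Sa tk subrK.
Qed.

Definition psum_indep_tail j := forall r J B, uniq J ->
  (forall i, i \in J -> (j < i <= m)%N) -> (forall i, measurable (B i)) ->
  P (psum tau j @^-1` [set r] `&` joint_event J B) =
  P (psum tau j @^-1` [set r]) * P (joint_event J B).

Lemma psum_joint_event_conv j r J B : (j < m)%N -> psum_indep_tail j ->
  uniq J -> (forall i, i \in J -> (j.+1 < i <= m)%N) ->
  (forall i, measurable (B i)) ->
  P (psum tau j.+1 @^-1` [set r] `&` joint_event J B) = P (joint_event J B) *
  \sum_(k <oo) (P (psum tau j @^-1` [set (r - k.+1%:R)%R]) *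
                P (tau j.+1 @^-1` [set k.+1%:R])).
Proof.
move=> jm indep_j uJ Jgt mB.
have mC := measurable_joint_event J mB.
have jJ : j.+1 \notin J by apply/negP => /Jgt; rewrite ltnn.
have jJ_range : {subset j.+1 :: J <= index_iota 1 m.+1}.
  move=> i; rewrite inE mem_index_iota => /orP[/eqP ->|/Jgt/andP[ji im]].
  - exact: jm.
  - by rewrite ltnS im andbT (leq_trans _ ji).
pose B' k i := if i == j.+1 then [set k.+1%:R] else B i.
have mB' k i : measurable (B' k i) by rewrite /B'; case: ifP.
have B'E k : tau j.+1 @^-1` [set k.+1%:R] `&` joint_event J B =
    joint_event (j.+1 :: J) (B' k).
  rewrite joint_event_cons {1}/B' eqxx; congr (_ `&` _).
  apply: eq_bigcapr => i /= iJ; rewrite /B' ifF //.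
  by apply: contraNF jJ => /eqP <-.
have finC : P (joint_event J B) \is a fin_num by exact: fin_num_measure.
rewrite psum_setI_decomp // -[P (joint_event J B)]fineK // -nneseriesZl;
  last by move=> k _; apply: mule_ge0.
apply: eq_eseriesr => k _; rewrite fineK //.
rewrite B'E indep_j //=; last 2 first.
- by rewrite jJ.
- move=> i; rewrite inE => /orP[/eqP ->|/Jgt/andP[ji im]].
  + by rewrite ltnSn.
  + by rewrite im (ltnW ji).
by rewrite -B'E joint_event_cons_indep /= ?jJ // muleA muleC.
Qed.

Lemma psum_indep j : (j <= m)%N -> psum_indep_tail j.
Proof.
elim: j => [_|j IH jm] r J B uJ Jgt mB.
  rewrite psum0_preimage; case: ifP => _.
  - by rewrite setTI probability_setT mul1e.
  - by rewrite set0I measure0 mul0e.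
have indep_j := IH (ltnW jm).
rewrite psum_joint_event_conv // -[psum tau j.+1 @^-1` [set r]]setIT.
by rewrite -(joint_event_nil B) psum_joint_event_conv // joint_event_nil
  probability_setT mul1e muleC.
Qed.

Lemma psum_tau_indep j r r' : (j < m)%N ->
  P (psum tau j @^-1` [set r] `&` tau j.+1 @^-1` [set r']) =
  P (psum tau j @^-1` [set r]) * P (tau j.+1 @^-1` [set r']).
Proof.
move=> jm; have := psum_indep (ltnW jm) r (J := [:: j.+1]) (B := fun=> [set r']).
rewrite joint_event_cons joint_event_nil setIT; apply => //.
by move=> i; rewrite inE => /eqP ->; rewrite ltnSn.
Qed.

Lemma psum_conv j r : (j < m)%N ->
  P (psum tau j.+1 @^-1` [set r]) =
  \sum_(k <oo) (P (psum tau j @^-1` [set (r - k.+1%:R)%R]) *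
                P (tau j.+1 @^-1` [set k.+1%:R])).
Proof.
move=> jm; rewrite -[psum tau j.+1 @^-1` [set r]]setIT psum_setI_decomp //.
by apply: eq_eseriesr => k _; rewrite setIT psum_tau_indep.
Qed.

Lemma psum_ae_nat j : (j <= m)%N -> ae_valued_in P (psum tau j) (fun s => s%:R).
Proof.
rewrite /ae_valued_in; elim: j => [_|j IH jm].
  rewrite (_ : ~` _ = set0) ?measure0 //.
  by apply/seteqP; split => t //= nt; apply: nt; exists 0%N => //=; rewrite psum0.
set U := \bigcup_s psum tau j @^-1` [set s%:R].
set V := \bigcup_k tau j.+1 @^-1` [set k.+1%:R].
have mU : measurable U by exact: bigcupT_measurable.
have mV : measurable V by exact: bigcupT_measurable.
have sub : ~` (\bigcup_s psum tau j.+1 @^-1` [set s%:R]) `<=` ~` U `|` ~` V.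
  rewrite -setCI; apply: subsetC => t [[s _ /= Ss] [k _ /= tk]].
  by exists (s + k.+1)%N => //=; rewrite psumS Ss tk natrD.
apply/eqP; rewrite eq_le measure_ge0 andbT.
apply: le_trans (le_measure _ _ _ sub) _; rewrite ?inE.
- by apply: measurableC; exact: bigcupT_measurable.
- by apply: measurableU; exact: measurableC.
apply: le_trans (measureU2 _ _ _) _; try exact: measurableC.
have /= -> := IH (ltnW jm).
by have /= -> := tau_pos_nat (i := j.+1) jm; rewrite adde0.
Qed.

End independent_partial_sums.

Lemma geometric_weight_tilt {R : comRingType} (a q p c c' : R) k :
  a * (1 - q) = 1 - p -> c * (a * q) = c' * p ->
  c * (a ^+ k.+1 * (q * (1 - q) ^+ k)) = c' * (p * (1 - p) ^+ k).
Proof.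
move=> tilt_compl tilt_param; rewrite -tilt_compl exprMn.
transitivity (c * (a * q) * (a ^+ k * (1 - q) ^+ k)); first by rewrite exprS; ring.
by rewrite tilt_param; ring.
Qed.

Lemma alpha_gt0 {R : realType} n : 0 < alpha_ n.+2 :> R.
Proof. by rewrite subr_gt0 invf_lt1 ?ltr1n. Qed.

Section coupon_parameters.
Variable R : realType.
Variables n j : nat.
Hypothesis jn : (j <= n)%N.

Let n1_neq0 : n%:R + 1 != 0 :> R. Proof. by rewrite natr1. Qed.
Let n2_neq0 : n%:R + 1 + 1 != 0 :> R. Proof. by rewrite !natr1. Qed.

Lemma alpha_geom_compl :
  alpha_ n.+2 * (1 - (n.+2 - j.+1)%:R / n.+1%:R) =
  1 - (n.+3 - j.+1)%:R / n.+2%:R :> R.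
Proof.
rewrite /alpha_ !subSS !natrB ?leqW ?(leq_trans jn) // -!natr1.
by field; rewrite n2_neq0 n1_neq0.
Qed.

Lemma alpha_geom_param :
  (n.+2 - j)%:R / n.+2%:R * (alpha_ n.+2 * ((n.+2 - j.+1)%:R / n.+1%:R)) =
  (n.+2 - j.+1)%:R / n.+2%:R * ((n.+3 - j.+1)%:R / n.+2%:R) :> R.
Proof.
rewrite /alpha_ !subSS !natrB ?leqW ?(leq_trans jn) // -!natr1.
by field; rewrite n2_neq0 n1_neq0.
Qed.

End coupon_parameters.

Lemma coupon_Z_recursion {R : realType} (n s k : nat) :
  (s%:R + k.+1%:R) / n.+2%:R - ln n.+2%:R =
  alpha_ n.+2 * (s%:R / n.+1%:R - ln n.+1%:R) + n.+2%:R^-1 * k.+1%:R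
    + delta_ n.+2 :> R.
Proof.
rewrite /delta_ /alpha_ subn1 /= -[n.+2%:R]natr1.
set N := n.+1%:R; have N0 : 0 < N by rewrite ltr0n.
have N10 : 0 < N + 1 by rewrite ltr_wpDr.
have -> : 1 - (N + 1)^-1 = N / (N + 1) by field; rewrite gt_eqF.
by rewrite ln_div ?posrE //; field; rewrite !gt_eqF.
Qed.

Lemma coupon_tilt_density {R : realType} (n s : nat) :
  n.+2%:R * expR (s%:R * ln (alpha_ n.+2)) =
  K_ n.+2 * expR (- beta_ n.+2 * (s%:R / n.+1%:R - ln n.+1%:R)) :> R.
Proof.
rewrite /K_ /beta_ /powR (gt_eqF (@alpha_gt0 R n)) subn1 /= -mulrA -expRD.
by congr (_ * expR _); field; rewrite addrC natr1.
Qed.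

Lemma Tm_psum {T : Type} {R : realType} (tau : nat -> nat -> T -> R) m w :
  Tm tau m w = psum (tau m) m w.
Proof. by []. Qed.

Lemma coupon_param_in01 {R : realType} (m i : nat) : (1 <= i <= m)%N ->
  0 < ((m.+1 - i)%:R / m%:R : R) <= 1.
Proof.
move=> /andP[i1 im]; have m0 : 0 < m%:R :> R by rewrite ltr0n (leq_trans i1).
rewrite divr_gt0 ?ltr0n ?subn_gt0 ?ltnS ?(leq_trans i1) //=.
rewrite ler_pdivrMr // mul1r ler_nat.
by rewrite leq_subLR -addn1 addnC leq_add2r.
Qed.

Section coupon_collector.
Context {d : measure_display} {T : measurableType d} {R : realType}.
Variable P : probability T R.
Variable tau : nat -> nat -> T -> R.
Hypothesis mtau : forall m i, measurable_fun [set: T] (tau m i).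
Hypothesis tau_geom : forall m i : nat, (1 <= m)%N -> (1 <= i <= m)%N ->
  is_geom P (tau m i) ((m.+1 - i)%:R / m%:R).
Hypothesis tau_indep : forall m : nat, (1 <= m)%N ->
  mutually_independent P (index_iota 1 m.+1) (tau m).
Local Open Scope ereal_scope.

Lemma tau_law m i k : (1 <= i <= m)%N ->
  P (tau m i @^-1` [set k.+1%:R]) =
  (((m.+1 - i)%:R / m%:R) * (1 - (m.+1 - i)%:R / m%:R) ^+ k)%:E.
Proof.
move=> im; have /andP[i1 /(leq_trans i1) m1] := im.
by rewrite tau_geom // subn1.
Qed.

Lemma tau_pos_nat m i : (1 <= i <= m)%N ->
  ae_valued_in P (tau m i) (fun k => k.+1%:R).
Proof.
move=> im.
apply: geometric_ae_valued_in (mtau m i) natrS_inj (@coupon_param_in01 R _ _ im) _.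
by move=> k; rewrite tau_law.
Qed.

Lemma psum_tau_conv m j r : (j < m)%N ->
  P (psum (tau m) j.+1 @^-1` [set r]) =
  \sum_(k <oo) (P (psum (tau m) j @^-1` [set (r - k.+1%:R)%R]) *
                P (tau m j.+1 @^-1` [set k.+1%:R])).
Proof.
move=> jm; have m1 : (1 <= m)%N := leq_ltn_trans (leq0n j) jm.
exact: (psum_conv (mtau m) (tau_indep m1) (@tau_pos_nat m) r jm).
Qed.

Lemma psum_tilt n j r : (j <= n.+1)%N ->
  (expR (r * ln (alpha_ n.+2))%R)%:E * P (psum (tau n.+1) j @^-1` [set r]) =
  ((n.+2 - j)%:R / n.+2%:R)%:E * P (psum (tau n.+2) j @^-1` [set r]).
Proof.
elim: j r => [|j IH] r jn.
  rewrite !psum0_preimage; case: eqP => [->|_]; last by rewrite measure0 !mule0.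
  by rewrite mul0r expR0 subn0 divff ?pnatr_eq0.
rewrite !psum_tau_conv ?(leq_trans jn) //.
rewrite -!nneseriesZl; try by move=> k _; apply: mule_ge0.
apply: eq_eseriesr => k _.
rewrite !tau_law ?ltnS ?jn ?(leq_trans jn) ?(ltnW jn) //.
have weight : ((n.+2 - j)%:R / n.+2%:R *
    (expR (k.+1%:R * ln (alpha_ n.+2)) *
     ((n.+2 - j.+1)%:R / n.+1%:R * (1 - (n.+2 - j.+1)%:R / n.+1%:R) ^+ k)) =
    (n.+2 - j.+1)%:R / n.+2%:R *
     ((n.+3 - j.+1)%:R / n.+2%:R * (1 - (n.+3 - j.+1)%:R / n.+2%:R) ^+ k) :> R)%R.
  rewrite expRM_natl lnK ?posrE ?alpha_gt0 //.
  have j_le_n : (j <= n)%N by [].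
  exact: geometric_weight_tilt (alpha_geom_compl R j_le_n) (alpha_geom_param R j_le_n).
have split_exp : (r * ln (alpha_ n.+2) =
    (r - k.+1%:R) * ln (alpha_ n.+2) + k.+1%:R * ln (alpha_ n.+2))%R.
  by rewrite -mulrDl subrK.
rewrite split_exp expRD EFinM muleACA IH; last exact: ltnW.
rewrite -EFinM muleAC -EFinM weight EFinM.
by rewrite -muleA [_ * P _]muleC.
Qed.

Lemma measurable_Zm m : measurable_fun [set: T] (Zm tau m).
Proof.
apply: measurable_funB; last exact: measurable_cst.
apply: measurable_funM; last exact: measurable_cst.
exact: measurable_psum.
Qed.

Lemma Zm_preimage m s : (1 <= m)%N ->
  Zm tau m @^-1` [set (s%:R / m%:R - ln m%:R)%R] = psum (tau m) m @^-1` [set s%:R].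
Proof.
move=> m1; have m0 : (m%:R^-1 != 0 :> R)%R by rewrite invr_eq0 pnatr_eq0 -lt0n.
apply/seteqP; split => w /=; rewrite /Zm Tm_psum; first by move=> /addIr/(mulIf m0).
by move=> ->.
Qed.

Lemma Zm_ae_valued_in m : (1 <= m)%N ->
  ae_valued_in P (Zm tau m) (fun s => s%:R / m%:R - ln m%:R)%R.
Proof.
move=> m1; rewrite /ae_valued_in (eq_bigcupr (fun s _ => Zm_preimage s m1)).
exact: psum_ae_nat (mtau m) (@tau_pos_nat m) _ (leqnn m).
Qed.

Lemma ge0_integral_Zm_decomp n (g : R -> R) :
  measurable_fun [set: R] g -> (forall x, 0 <= g x)%R ->
  \int[P]_w (g (Zm tau n.+2 w))%:E =
  \sum_(s <oo) \sum_(k <oo)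
    ((g ((s%:R + k.+1%:R) / n.+2%:R - ln n.+2%:R))%:E *
     P (psum (tau n.+2) n.+1 @^-1` [set s%:R] `&` tau n.+2 n.+2 @^-1` [set k.+1%:R])).
Proof.
move=> mg g0; apply: ge0_integral_discrete2.
- by apply/measurable_EFinP; apply: measurableT_comp mg (measurable_Zm _).
- by move=> t; rewrite lee_fin.
- exact: measurable_psum.
- exact: mtau.
- exact: mulrIn (oner_neq0 R).
- exact: natrS_inj.
- exact: psum_ae_nat (mtau _) (@tau_pos_nat n.+2) _ (leqnSn _).
- by apply: tau_pos_nat; rewrite leqnn.
- by move=> s k t Ss tk; rewrite /Zm Tm_psum psumS Ss tk.
Qed.

Lemma ge0_integral_tilted_decomp n (G : T -> R) (g : R -> R) :
  measurable_fun [set: T] G -> is_scaled_geom P G n.+2%:R^-1%R n.+2%:R^-1%R ->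
  measurable_fun [set: R] g -> (forall x, 0 <= g x)%R ->
  \int[P]_w (expR (- beta_ n.+2 * Zm tau n.+1 w) *
            g (alpha_ n.+2 * Zm tau n.+1 w + G w + delta_ n.+2))%:E =
  \sum_(s <oo) \sum_(k <oo)
    ((expR (- beta_ n.+2 * (s%:R / n.+1%:R - ln n.+1%:R)) *
      g (alpha_ n.+2 * (s%:R / n.+1%:R - ln n.+1%:R) + n.+2%:R^-1 * k.+1%:R
         + delta_ n.+2))%:E *
     P (Zm tau n.+1 @^-1` [set (s%:R / n.+1%:R - ln n.+1%:R)%R] `&`
        G @^-1` [set (n.+2%:R^-1 * k.+1%:R)%R])).
Proof.
move=> mG lawG mg g0.
have n2_neq0 : (n.+2%:R^-1 != 0 :> R)%R by rewrite invr_eq0 pnatr_eq0.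
have n1_neq0 : (n.+1%:R^-1 != 0 :> R)%R by rewrite invr_eq0 pnatr_eq0.
have mZ := measurable_Zm n.+1.
have G_inj : injective (fun k : nat => n.+2%:R^-1 * k.+1%:R : R)%R.
  by move=> a b /= /(mulfI n2_neq0) /natrS_inj.
apply: ge0_integral_discrete2 => //.
- apply/measurable_EFinP; apply: measurable_funM.
    exact/measurableT_comp/measurable_funM.
  apply: measurableT_comp mg _.
  by apply: measurable_funD => //; apply: measurable_funD => //; exact: measurable_funM.
- by move=> t; rewrite lee_fin mulr_ge0 ?expR_ge0.
- by move=> a b /addIr /(mulIf n1_neq0) /(mulrIn (oner_neq0 R)).
- exact: Zm_ae_valued_in.
- apply: (geometric_ae_valued_in (p := n.+2%:R^-1%R) mG G_inj).
  + by rewrite invr_gt0 ltr0n invf_le1 // ler1n.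
  + by move=> k; rewrite (lawG k.+1) // subn1.
- by move=> s k t -> ->.
Qed.

Lemma ge0_integral_Zm_tilt n (G : T -> R) (g : R -> R) :
  measurable_fun [set: T] G -> is_scaled_geom P G n.+2%:R^-1%R n.+2%:R^-1%R ->
  independent2 P (Zm tau n.+1) G ->
  measurable_fun [set: R] g -> (forall x, 0 <= g x)%R ->
  \int[P]_w (g (Zm tau n.+2 w))%:E =
  (K_ n.+2)%:E * \int[P]_w (expR (- beta_ n.+2 * Zm tau n.+1 w) *
                            g (alpha_ n.+2 * Zm tau n.+1 w + G w + delta_ n.+2))%:E.
Proof.
move=> mG lawG ZG_indep mg g0.
rewrite ge0_integral_Zm_decomp // ge0_integral_tilted_decomp //.
rewrite -nneseriesZl; last first.
  move=> s _; apply: nneseries_ge0 => k _ _.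
  by rewrite mule_ge0 ?lee_fin ?mulr_ge0 ?expR_ge0.
apply: eq_eseriesr => s _.
rewrite -nneseriesZl; last by move=> k _; rewrite mule_ge0 ?lee_fin ?mulr_ge0 ?expR_ge0.
apply: eq_eseriesr => k _.
rewrite ZG_indep ?Zm_preimage //; try exact: measurable_set1.
rewrite (psum_tau_indep (mtau n.+2) (tau_indep _) (@tau_pos_nat n.+2)) //.
have lawG_tau : P (tau n.+2 n.+2 @^-1` [set k.+1%:R]) =
    P (G @^-1` [set (n.+2%:R^-1 * k.+1%:R)%R]).
  by rewrite tau_law ?leqnn // (lawG k.+1) // subn1 subSnn mul1r.
have tilt : P (psum (tau n.+2) n.+1 @^-1` [set s%:R]) =
    (n.+2%:R * expR (s%:R * ln (alpha_ n.+2)))%:E *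
    P (psum (tau n.+1) n.+1 @^-1` [set s%:R]).
  have := psum_tilt s%:R (leqnn n.+1).
  rewrite subSnn => tilt_s.
  by rewrite EFinM -muleA tilt_s muleA -EFinM mul1r mulfV ?pnatr_eq0 // mul1e.
rewrite lawG_tau tilt !muleA -!EFinM coupon_Z_recursion.
by congr (_%:E * _ * _); rewrite coupon_tilt_density; ring.
Qed.

End coupon_collector.

Lemma gt0_muleBr {R : realType} (k : R) (a b : \bar R) : 0 < k ->
  (0 <= a)%E -> (0 <= b)%E -> (k%:E * (a - b) = k%:E * a - k%:E * b)%E.
Proof.
move=> k0 a0; case: b => [b| |] // b0; first by rewrite muleBr // fin_num_adde_defl.
rewrite gt0_muley ?lte_fin // !addeNy.
by case: a a0 => [a| |] // _; rewrite gt0_muleNy ?lte_fin.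
Qed.

Section integral_transfer.
Context {d d' : measure_display} {T : measurableType d} {T' : measurableType d'}.
Context {R : realType}.
Variables (mu : {measure set T -> \bar R}) (nu : {measure set T' -> \bar R}).
Variables (Z : T -> R) (W : T' -> R) (e : T' -> R) (K : R).
Hypotheses (K_gt0 : 0 < K) (e_gt0 : forall t, 0 < e t).
Local Open Scope ereal_scope.

Lemma integral_comp_eq_from_ge0 :
  (forall g : R -> R, measurable_fun [set: R] g -> (forall x, 0 <= g x)%R ->
    \int[mu]_t (g (Z t))%:E = K%:E * \int[nu]_t (e t * g (W t))%:E) ->
  forall g : R -> R, measurable_fun [set: R] g ->
    \int[mu]_t (g (Z t))%:E = K%:E * \int[nu]_t (e t * g (W t))%:E.
Proof.
move=> transfer g mg.
pose gp := (g \max cst 0)%R; pose gn := ((\- g) \max cst 0)%R.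
have mgp : measurable_fun [set: R] gp := measurable_maxr mg (measurable_cst _).
have mgn : measurable_fun [set: R] gn.
  exact: measurable_maxr (measurable_funN mg) (measurable_cst _).
have gp_ge0 x : (0 <= gp x)%R by rewrite /gp /= le_max lexx orbT.
have gn_ge0 x : (0 <= gn x)%R by rewrite /gn /= le_max lexx orbT.
rewrite integralE [in RHS]integralE.
rewrite (eq_integral (fun t => (gp (Z t))%:E)); last first.
  by move=> t _; rewrite funeposE /gp /= EFin_max.
rewrite [X in _ - X](eq_integral (fun t => (gn (Z t))%:E)); last first.
  by move=> t _; rewrite funenegE /gn /= EFin_max.
rewrite [X in _ * (X - _)](eq_integral (fun t => (e t * gp (W t))%R%:E)); last first.
  by move=> t _; rewrite funeposE /gp /= -EFin_max maxr_pMr ?mulr0 ?ltW.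
rewrite [X in _ * (_ - X)](eq_integral (fun t => (e t * gn (W t))%R%:E)); last first.
  by move=> t _; rewrite funenegE /gn /= -EFin_max -mulrN maxr_pMr ?mulr0 ?ltW.
rewrite gt0_muleBr //; last 2 first.
- by apply: integral_ge0 => t _; rewrite lee_fin mulr_ge0 // ltW.
- by apply: integral_ge0 => t _; rewrite lee_fin mulr_ge0 // ltW.
by congr (_ - _); apply: transfer.
Qed.

End integral_transfer.

Theorem lemma3p3 (R : realType) (d : measure_display) (T : measurableType d)
  (P : probability T R) (tau : nat -> nat -> {RV P >-> R}) (G : {RV P >-> R})
  (f : R -> R) (n : nat) :
  (forall x : R, derivable f x 1) -> continuous (derive1 f) ->
  (2 <= n)%N ->
  (forall m i : nat, (1 <= m)%N -> (1 <= i <= m)%N ->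
     is_geom P (tau m i) ((m.+1 - i)%:R / m%:R)) ->
  (forall m : nat, (1 <= m)%N ->
     mutually_independent P (index_iota 1 m.+1) (fun i => tau m i : T -> R)) ->
  is_scaled_geom P G (n%:R^-1) (n%:R^-1) ->
  independent2 P (Zm (fun m i => tau m i : T -> R) n.-1) G ->
  ('E_P[fun w => (derive1 f) (Zm (fun m i => tau m i : T -> R) n w)] =
  ((K_ n)%:E *
   'E_P[fun w => (expR (- beta_ n * Zm (fun m i => tau m i : T -> R) n.-1 w) *
        (derive1 f) (alpha_ n * Zm (fun m i => tau m i : T -> R) n.-1 w + G w + delta_ n))%R])%E)%E.
Proof.
move=> _ df_cont + tau_geom tau_indep.
case: n => [|[|n]] // _ lawG ZG_indep.
have mtau m i : measurable_fun [set: T] (tau m i) := measurable_funPT (tau m i).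
have mG : measurable_fun [set: T] G := measurable_funPT G.
have K_gt0 : 0 < K_ n.+2 :> R by rewrite mulr_gt0 ?ltr0n ?powR_gt0 ?alpha_gt0.
rewrite !expectation.unlock.
apply: (integral_comp_eq_from_ge0 K_gt0 (fun _ => expR_gt0 _)).
- move=> g mg g_ge0.
  exact: ge0_integral_Zm_tilt mtau tau_geom tau_indep n G g mG lawG ZG_indep mg g_ge0.
- exact: continuous_measurable_fun.
Qed.
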